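(* Let $s,\alpha\in\mathbb{R}$ with $s+\alpha\ge0$, $\alpha<3/4$ and $s>-3/4$. Then for every $t\in\mathbb{R}$ the bilinear operator $B_2$ defined in the context maps $\dot H^s\times\dot H^s$ into $\dot H^{s+\alpha}$ and satisfies $$\|B_2(u,v)\|_{\dot H^{s+\alpha}}\le c_2'(s,\alpha)\|u\|_{\dot H^s}\|v\|_{\dot H^s},$$ with a constant $c_2'(s,\alpha)$ depending only on $s,\alpha$.
   Context: Write $\mathbb{Z}_0=\mathbb{Z}\setminus\{0\}$. For $s\in\mathbb{R}$, $\dot H^s$ denotes the Hilbert space of complex sequences $v=(v_k)_{k\in\mathbb{Z}_0}$ with $\|v\|_{\dot H^s}^2=\sum_{k\in\mathbb{Z}_0}|k|^{2s}|v_k|^2<\infty$. For $t\in\mathbb{R}$, $$B_2(u,v)_k=\sum_{k_1+k_2=k,\ k_1,k_2\in\mathbb{Z}_0}\frac{e^{3ikk_1k_2t}u_{k_1}v_{k_2}}{k_1k_2},\qquad k\in\mathbb{Z}_0.$$ *)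

From Stdlib Require Import Reals ZArith.
From Coquelicot Require Import Coquelicot.
Open Scope R_scope.

Definition zsummable (f : Z -> R) : Prop :=
  ex_series (fun n : nat => Rabs (f (Z.of_nat n))) /\
  ex_series (fun n : nat => Rabs (f (- Z.of_nat (S n))%Z)).

Definition zsum (f : Z -> R) : R :=
  Series (fun n : nat => f (Z.of_nat n)) +
  Series (fun n : nat => f (- Z.of_nat (S n))%Z).

(* Sequences indexed by Z_0 are modelled as v : Z -> C; the value v 0 is
   ignored everywhere (all sums below exclude the index 0). *)

Definition hterm (s : R) (v : Z -> C) (k : Z) : R :=
  if Z.eq_dec k 0 then 0
  else Rpower (Rabs (IZR k)) (2 * s) * (Cmod (v k)) ^ 2.

Definition In_Hs (s : R) (v : Z -> C) : Prop := zsummable (hterm s v).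

Definition Hnorm (s : R) (v : Z -> C) : R := sqrt (zsum (hterm s v)).

Definition Cexpi (theta : R) : C := (cos theta, sin theta).

Definition b2term (t : R) (u v : Z -> C) (k k1 : Z) : C :=
  let k2 := (k - k1)%Z in
  if Z.eq_dec k1 0 then RtoC 0
  else if Z.eq_dec k2 0 then RtoC 0
  else Cdiv (Cmult (Cmult (Cexpi (3 * IZR k * IZR k1 * IZR k2 * t)) (u k1)) (v k2))
            (RtoC (IZR k1 * IZR k2)).

Definition B2 (t : R) (u v : Z -> C) (k : Z) : C :=
  (zsum (fun k1 => fst (b2term t u v k k1)), zsum (fun k1 => snd (b2term t u v k k1))).

(* Writing h_w(j) = |j|^(2s) |w_j|^2, each summand of B_2(u,v)_k satisfies
   |b_(k,k1)|^2 = |k1 k2|^(-2(1+s)) h_u(k1) h_v(k2), so by Cauchy-Schwarz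
   |B_2(u,v)_k|^2 <= W_k (h_u * h_v)(k) with W_k = sum_(k1+k2=k) |k1 k2|^(-2(1+s)).
   Splitting 1 + s = r + b with b = s + alpha >= 0 and r = 1 - alpha, and using
   |k| <= 2 max(|k1|, |k2|), one gets |k|^(2b) W_k <= 2^(2b) * 2 sum_j |j|^(-4r),
   which is finite exactly because alpha < 3/4.  Summing over k, the convolution
   h_u * h_v has total mass ||u||^2 ||v||^2. *)

From Stdlib Require Import Reals ZArith Lra Lia.
From Coquelicot Require Import Coquelicot.
Open Scope R_scope.

Fixpoint zsum_from (g : Z -> R) (m : Z) (L : nat) : R :=
  match L with O => 0 | S L' => g m + zsum_from g (m + 1)%Z L' end.

Lemma zsum_from_add g L1 : forall m L2,
  zsum_from g m (L1 + L2) = zsum_from g m L1 + zsum_from g (m + Z.of_nat L1)%Z L2.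
Proof.
  induction L1 as [|L1 IH]; intros m L2; simpl.
  - rewrite Z.add_0_r; lra.
  - rewrite IH. replace (m + 1 + Z.of_nat L1)%Z with (m + Z.pos (Pos.of_succ_nat L1))%Z by lia.
    lra.
Qed.

Lemma zsum_from_nonneg g m L : (forall k, 0 <= g k) -> 0 <= zsum_from g m L.
Proof.
  intros H; revert m; induction L as [|L IH]; intros m; simpl; [lra|].
  specialize (H m); specialize (IH (m + 1)%Z); lra.
Qed.

Lemma zsum_from_scal c f m L : zsum_from (fun k => c * f k) m L = c * zsum_from f m L.
Proof. revert m; induction L as [|L IH]; intros m; simpl; [lra|]. rewrite IH; lra. Qed.

Lemma zsum_from_translate g c m L :
  zsum_from (fun j => g (j - c)%Z) m L = zsum_from g (m - c)%Z L.
Proof.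
  revert m; induction L as [|L IH]; intros m; simpl; [lra|]. rewrite IH.
  replace (m + 1 - c)%Z with (m - c + 1)%Z by lia; lra.
Qed.

Lemma zsum_from_widen g m L m' L' : (forall k, 0 <= g k) ->
  (m' <= m)%Z -> (m + Z.of_nat L <= m' + Z.of_nat L')%Z ->
  zsum_from g m L <= zsum_from g m' L'.
Proof.
  intros Hg H1 H2.
  set (a := Z.to_nat (m - m')).
  set (b := (L' - a - L)%nat).
  assert (HL' : L' = (a + (L + b))%nat) by (unfold b, a; lia).
  rewrite HL', !zsum_from_add.
  replace (m' + Z.of_nat a)%Z with m by (unfold a; lia).
  pose proof (zsum_from_nonneg g m' a Hg).
  pose proof (zsum_from_nonneg g (m + Z.of_nat L) b Hg). lra.
Qed.

Lemma sum_n_nonneg_zsum_from (g : Z -> R) N :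
  sum_n (fun n => g (Z.of_nat n)) N = zsum_from g 0 (S N).
Proof.
  induction N as [|N IH].
  - rewrite sum_O; simpl; lra.
  - rewrite sum_Sn, IH. replace (S (S N)) with (S N + 1)%nat by lia.
    rewrite zsum_from_add; simpl. unfold plus; simpl. lra.
Qed.

Lemma sum_n_neg_zsum_from (g : Z -> R) N :
  sum_n (fun n => g (- Z.of_nat (S n))%Z) N = zsum_from g (- Z.of_nat (S N))%Z (S N).
Proof.
  induction N as [|N IH].
  - rewrite sum_O; cbn [zsum_from]. replace (- Z.of_nat 1)%Z with (-1)%Z by lia. lra.
  - rewrite sum_Sn, IH. unfold plus; cbn [zsum_from].
    replace (- Z.of_nat (S (S N)) + 1)%Z with (- Z.of_nat (S N))%Z by lia.
    apply Rplus_comm.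
Qed.

Definition zsum_sym (g : Z -> R) (N : nat) : R :=
  zsum_from g (- Z.of_nat (S N))%Z (S N + S N).

Lemma zsum_sym_split (g : Z -> R) N :
  zsum_sym g N = sum_n (fun n => g (Z.of_nat n)) N + sum_n (fun n => g (- Z.of_nat (S n))%Z) N.
Proof.
  unfold zsum_sym. rewrite zsum_from_add, sum_n_nonneg_zsum_from, sum_n_neg_zsum_from.
  replace (- Z.of_nat (S N) + Z.of_nat (S N))%Z with 0%Z by lia. lra.
Qed.

Lemma Series_nonneg (a : nat -> R) : (forall n, 0 <= a n) -> ex_series a -> 0 <= Series a.
Proof.
  intros Ha He. rewrite <- (Rmult_0_l (Series a)), <- Series_scal_l.
  apply Series_le; auto. intros n; rewrite Rmult_0_l; split; [lra | apply Ha].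
Qed.

Lemma sum_n_le_Series (a : nat -> R) N :
  (forall n, 0 <= a n) -> ex_series a -> sum_n a N <= Series a.
Proof.
  intros Ha He. rewrite (Series_incr_n a (S N)) by (lia || auto).
  rewrite sum_n_Reals.
  assert (0 <= Series (fun k => a (S N + k)%nat)).
  { apply Series_nonneg; auto. apply (ex_series_incr_n a (S N)); auto. }
  simpl in *; lra.
Qed.

Lemma ex_series_bounded_sum_n (a : nat -> R) B :
  (forall n, 0 <= a n) -> (forall N, sum_n a N <= B) -> ex_series a.
Proof.
  intros Ha HB. destruct (ex_finite_lim_seq_incr (sum_n a) B) as [l Hl].
  - intros n. rewrite sum_Sn. unfold plus; simpl. specialize (Ha (S n)); lra.
  - auto.
  - exists l. exact Hl.
Qed.

Lemma zsummable_ex_series_nonneg g : zsummable g -> ex_series (fun n => g (Z.of_nat n)).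
Proof. intros [H _]. apply ex_series_Rabs; auto. Qed.

Lemma zsummable_ex_series_neg g : zsummable g -> ex_series (fun n => g (- Z.of_nat (S n))%Z).
Proof. intros [_ H]. apply ex_series_Rabs; auto. Qed.

Lemma ex_series_le_R (a b : nat -> R) :
  (forall n, Rabs (a n) <= b n) -> ex_series b -> ex_series a.
Proof. exact (ex_series_le (K := R_AbsRing) (V := R_CompleteNormedModule) a b). Qed.

Lemma zsummable_le f g : (forall k, Rabs (f k) <= g k) -> zsummable g -> zsummable f.
Proof.
  intros H [H1 H2]. split.
  - apply (ex_series_le_R _ (fun n => Rabs (g (Z.of_nat n)))); auto.
    intros n. rewrite Rabs_Rabsolu. eapply Rle_trans; [apply H | apply Rle_abs].
  - apply (ex_series_le_R _ (fun n => Rabs (g (- Z.of_nat (S n))%Z))); auto.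
    intros n. rewrite Rabs_Rabsolu. eapply Rle_trans; [apply H | apply Rle_abs].
Qed.

Lemma zsummable_plus f g : zsummable f -> zsummable g -> zsummable (fun k => f k + g k).
Proof.
  intros [F1 F2] [G1 G2]. split.
  - apply (ex_series_le_R _ (fun n =>
       Rabs (f (Z.of_nat n)) + Rabs (g (Z.of_nat n)))).
    + intros n. rewrite Rabs_Rabsolu. apply Rabs_triang.
    + apply (ex_series_plus _ _ F1 G1).
  - apply (ex_series_le_R _ (fun n =>
       Rabs (f (- Z.of_nat (S n))%Z) + Rabs (g (- Z.of_nat (S n))%Z))).
    + intros n. rewrite Rabs_Rabsolu. apply Rabs_triang.
    + apply (ex_series_plus _ _ F2 G2).
Qed.

Lemma zsummable_scal c f : zsummable f -> zsummable (fun k => c * f k).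
Proof.
  intros [F1 F2]. split.
  - apply (ex_series_le_R _ (fun n => Rabs c * Rabs (f (Z.of_nat n)))).
    + intros n. rewrite Rabs_Rabsolu, Rabs_mult. lra.
    + apply (ex_series_scal_l (Rabs c) _ F1).
  - apply (ex_series_le_R _ (fun n =>
       Rabs c * Rabs (f (- Z.of_nat (S n))%Z))).
    + intros n. rewrite Rabs_Rabsolu, Rabs_mult. lra.
    + apply (ex_series_scal_l (Rabs c) _ F2).
Qed.

Lemma zsummable_ext f g : (forall k, f k = g k) -> zsummable f -> zsummable g.
Proof.
  intros H [H1 H2].
  split; [eapply ex_series_ext; [|exact H1] | eapply ex_series_ext; [|exact H2]];
    intros n; simpl; rewrite H; reflexivity.
Qed.

Lemma zsum_plus f g : zsummable f -> zsummable g ->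
  zsum (fun k => f k + g k) = zsum f + zsum g.
Proof.
  intros Hf Hg. unfold zsum.
  rewrite (Series_plus _ _ (zsummable_ex_series_nonneg _ Hf) (zsummable_ex_series_nonneg _ Hg)).
  rewrite (Series_plus _ _ (zsummable_ex_series_neg _ Hf) (zsummable_ex_series_neg _ Hg)).
  lra.
Qed.

Lemma zsum_scal c f : zsum (fun k => c * f k) = c * zsum f.
Proof. unfold zsum. rewrite !Series_scal_l. lra. Qed.

Lemma zsum_ext f g : (forall k, f k = g k) -> zsum f = zsum g.
Proof.
  intros H. unfold zsum.
  rewrite (Series_ext _ _ (fun n => H _)), (Series_ext _ _ (fun n => H (- Z.of_nat (S n))%Z)).
  reflexivity.
Qed.

Lemma zsum_nonneg g : (forall k, 0 <= g k) -> zsummable g -> 0 <= zsum g.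
Proof.
  intros Hg Hs. unfold zsum.
  pose proof (Series_nonneg _ (fun n => Hg _) (zsummable_ex_series_nonneg _ Hs)).
  pose proof (Series_nonneg _ (fun n => Hg _) (zsummable_ex_series_neg _ Hs)). lra.
Qed.

Lemma zsum_le f g : zsummable f -> zsummable g -> (forall k, f k <= g k) -> zsum f <= zsum g.
Proof.
  intros Hf Hg H.
  assert (Hd : zsummable (fun k => g k + (-1) * f k))
    by (apply zsummable_plus; auto; apply zsummable_scal; auto).
  assert (Hp : forall k, 0 <= g k + (-1) * f k) by (intros k; specialize (H k); lra).
  pose proof (zsum_nonneg _ Hp Hd) as N.
  rewrite zsum_plus, zsum_scal in N; auto using zsummable_scal. lra.
Qed.

Lemma zsum_le_of_le f g : (forall k, 0 <= f k <= g k) -> zsummable g ->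
  zsummable f /\ zsum f <= zsum g.
Proof.
  intros H Sg.
  assert (Sf : zsummable f).
  { apply (zsummable_le _ g); auto. intros k. rewrite Rabs_pos_eq; apply H. }
  split; auto. apply zsum_le; auto. intros k; apply H.
Qed.

Lemma zsum_sym_le_zsum g N : (forall k, 0 <= g k) -> zsummable g -> zsum_sym g N <= zsum g.
Proof.
  intros Hg Hs. rewrite zsum_sym_split. unfold zsum.
  pose proof (sum_n_le_Series _ N (fun n => Hg _) (zsummable_ex_series_nonneg _ Hs)).
  pose proof (sum_n_le_Series _ N (fun n => Hg _) (zsummable_ex_series_neg _ Hs)). lra.
Qed.

Lemma zsum_from_le_zsum g m L : (forall k, 0 <= g k) -> zsummable g -> zsum_from g m L <= zsum g.
Proof.
  intros Hg Hs.
  apply Rle_trans with (zsum_sym g (Z.to_nat (Z.abs m) + L)); [| apply zsum_sym_le_zsum; auto].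
  unfold zsum_sym. apply zsum_from_widen; auto; lia.
Qed.

Lemma zsum_ge_term g j : (forall k, 0 <= g k) -> zsummable g -> g j <= zsum g.
Proof. intros Hg Hs. pose proof (zsum_from_le_zsum g j 1 Hg Hs). simpl in *. lra. Qed.

Lemma zsummable_of_bounded_zsum_sym g B : (forall k, 0 <= g k) ->
  (forall N, zsum_sym g N <= B) -> zsummable g /\ zsum g <= B.
Proof.
  intros Hg HB.
  assert (Hpos : forall N, sum_n (fun n => g (Z.of_nat n)) N <= B).
  { intros N. specialize (HB N). rewrite zsum_sym_split, sum_n_neg_zsum_from in HB.
    pose proof (zsum_from_nonneg g (- Z.of_nat (S N)) (S N) Hg). lra. }
  assert (Hneg : forall N, sum_n (fun n => g (- Z.of_nat (S n))%Z) N <= B).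
  { intros N. specialize (HB N). rewrite zsum_sym_split, sum_n_nonneg_zsum_from in HB.
    pose proof (zsum_from_nonneg g 0 (S N) Hg). lra. }
  pose proof (ex_series_bounded_sum_n _ B (fun n => Hg _) Hpos) as E1.
  pose proof (ex_series_bounded_sum_n _ B (fun n => Hg _) Hneg) as E2.
  split.
  - split; eapply ex_series_ext; [| exact E1 | | exact E2]; intros n; simpl;
      rewrite Rabs_pos_eq; auto.
  - assert (L := is_lim_seq_plus' _ _ _ _ (Series_correct _ E1) (Series_correct _ E2)).
    refine (is_lim_seq_le _ (fun _ => B) _ B _ L (is_lim_seq_const B)).
    intros N. rewrite <- zsum_sym_split. apply HB.
Qed.

Lemma zsummable_translate g c : (forall k, 0 <= g k) -> zsummable g ->
  zsummable (fun j => g (j - c)%Z) /\ zsum (fun j => g (j - c)%Z) <= zsum g.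
Proof.
  intros Hg Hs. apply zsummable_of_bounded_zsum_sym; [intros; auto|].
  intros N. unfold zsum_sym. rewrite zsum_from_translate. apply zsum_from_le_zsum; auto.
Qed.

Lemma zsum_zsum_from (h : Z -> Z -> R) m L : (forall k, zsummable (h k)) ->
  zsummable (fun j => zsum_from (fun k => h k j) m L) /\
  zsum (fun j => zsum_from (fun k => h k j) m L) = zsum_from (fun k => zsum (h k)) m L.
Proof.
  intros Hs. revert m; induction L as [|L IH]; intros m; simpl.
  - split.
    + apply (zsummable_ext (fun j => 0 * h 0%Z j)); [intros; ring|].
      apply zsummable_scal, Hs.
    + transitivity (0 * zsum (h 0%Z)); [|ring].
      rewrite <- zsum_scal. apply zsum_ext; intros; ring.
  - destruct (IH (m + 1)%Z) as [S1 E1]. split.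
    + apply zsummable_plus; auto.
    + rewrite zsum_plus, E1; auto.
Qed.

Definition zconv (f g : Z -> R) (k : Z) : R := zsum (fun j => f j * g (k - j)%Z).

Lemma zsummable_conv_term f g k : (forall j, 0 <= f j) -> (forall j, 0 <= g j) ->
  zsummable f -> zsummable g -> zsummable (fun j => f j * g (k - j)%Z).
Proof.
  intros Hf Hg Sf Sg.
  apply (zsummable_le _ (fun j => zsum g * f j)); [| apply zsummable_scal; auto].
  intros j. pose proof (Hf j). pose proof (zsum_ge_term g (k - j) Hg Sg).
  rewrite Rabs_pos_eq by (apply Rmult_le_pos; auto). nra.
Qed.

Lemma zsum_conv_le f g : (forall j, 0 <= f j) -> (forall j, 0 <= g j) ->
  zsummable f -> zsummable g ->
  zsummable (zconv f g) /\ zsum (zconv f g) <= zsum f * zsum g.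
Proof.
  intros Hf Hg Sf Sg. apply zsummable_of_bounded_zsum_sym.
  { intros k. unfold zconv.
    apply zsum_nonneg; [intros j; apply Rmult_le_pos; auto | apply zsummable_conv_term; auto]. }
  intros N. unfold zsum_sym.
  set (m := (- Z.of_nat (S N))%Z). set (L := (S N + S N)%nat).
  destruct (zsum_zsum_from (fun k j => f j * g (k - j)%Z) m L) as [S E].
  { intros k. apply zsummable_conv_term; auto. }
  unfold zconv. rewrite <- E, (Rmult_comm (zsum f)), <- zsum_scal.
  apply zsum_le; auto; [apply zsummable_scal; auto|].
  intros j. rewrite zsum_from_scal, zsum_from_translate.
  pose proof (zsum_from_le_zsum g (m - j) L Hg Sg). pose proof (Hf j). nra.
Qed.

Lemma amgm_of_sq_le a w h l : 0 <= w -> 0 <= h -> a ^ 2 <= w * h ->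
  2 * l * a <= l * l * w + h.
Proof.
  intros Hw Hh Ha.
  assert (0 <= l * l * w + h) by nra.
  assert (l * l * a ^ 2 <= l * l * (w * h)) by (apply Rmult_le_compat_l; nra).
  assert ((2 * l * a) ^ 2 <= (l * l * w + h) ^ 2) by (pose proof (pow2_ge_0 (l * l * w - h)); nra).
  nra.
Qed.

Lemma sq_le_of_forall_amgm Z W G : 0 <= Z -> 0 <= W -> 0 <= G ->
  (forall l, 0 < l -> 2 * l * Z <= l * l * W + G) -> Z ^ 2 <= W * G.
Proof.
  intros HZ HW HG H.
  destruct (Req_dec Z 0) as [Z0|Z0]; [subst; nra|].
  destruct (Req_dec W 0) as [W0|W0].
  - subst W. exfalso. specialize (H ((G + 1) / Z) ltac:(apply Rdiv_lt_0_compat; lra)).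
    replace (2 * ((G + 1) / Z) * Z) with (2 * (G + 1)) in H by (field; lra).
    lra.
  - specialize (H (Z / W) ltac:(apply Rdiv_lt_0_compat; lra)).
    replace (2 * (Z / W) * Z) with (2 * (Z ^ 2 / W)) in H by (field; lra).
    replace (Z / W * (Z / W) * W) with (Z ^ 2 / W) in H by (field; lra).
    apply (Rmult_le_reg_r (/ W)); [apply Rinv_0_lt_compat; lra|].
    replace (W * G * / W) with G by (field; lra). unfold Rdiv in H. lra.
Qed.

Lemma zsum_cauchy_schwarz a w h :
  (forall k, 0 <= a k) -> (forall k, 0 <= w k) -> (forall k, 0 <= h k) ->
  (forall k, a k ^ 2 <= w k * h k) -> zsummable w -> zsummable h ->
  zsummable a /\ zsum a ^ 2 <= zsum w * zsum h.
Proof.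
  intros Ha Hw Hh Hawh Sw Sh.
  assert (Sa : zsummable a).
  { apply (zsummable_le _ (fun k => / 2 * (w k + h k)));
      [| apply zsummable_scal, zsummable_plus; auto].
    intros k. pose proof (amgm_of_sq_le (a k) (w k) (h k) 1 (Hw k) (Hh k) (Hawh k)).
    rewrite Rabs_pos_eq by auto. lra. }
  split; auto.
  apply sq_le_of_forall_amgm; auto using zsum_nonneg.
  intros l Hl.
  rewrite <- zsum_scal, <- zsum_scal, <- zsum_plus by (auto using zsummable_scal).
  apply zsum_le; auto using zsummable_scal, zsummable_plus.
  intros k. pose proof (amgm_of_sq_le (a k) (w k) (h k) l (Hw k) (Hh k) (Hawh k)). lra.
Qed.

Lemma dot2_le_sqrt_mul X Y a c : X * a + Y * c <= sqrt (X ^ 2 + Y ^ 2) * sqrt (a ^ 2 + c ^ 2).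
Proof.
  rewrite <- sqrt_mult by nra.
  destruct (Rle_dec (X * a + Y * c) 0).
  { pose proof (sqrt_pos ((X ^ 2 + Y ^ 2) * (a ^ 2 + c ^ 2))); lra. }
  rewrite <- (sqrt_pow2 (X * a + Y * c)) by lra. apply sqrt_le_1_alt.
  pose proof (pow2_ge_0 (X * c - Y * a)). nra.
Qed.

(* Test the sum (X, Y) against its own direction: X^2 + Y^2 is the sum of the
   X fst (b k) + Y snd (b k), each at most |(X, Y)| |b k|. *)
Lemma Cmod_zsum_le (b : Z -> C) : zsummable (fun k => Cmod (b k)) ->
  Cmod (zsum (fun k => fst (b k)), zsum (fun k => snd (b k))) <= zsum (fun k => Cmod (b k)).
Proof.
  intros Sb.
  assert (Sf : zsummable (fun k => fst (b k)))
    by apply (zsummable_le _ _ (fun k => re_le_Cmod (b k)) Sb).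
  assert (Ss : zsummable (fun k => snd (b k))).
  { apply (zsummable_le _ (fun k => Cmod (b k))); auto. intros k.
    pose proof (Rmax_Cmod (b k)). pose proof (Rmax_r (Rabs (fst (b k))) (Rabs (snd (b k)))). lra. }
  set (X := zsum (fun k => fst (b k))). set (Y := zsum (fun k => snd (b k))).
  set (r := Cmod (X, Y)).
  assert (Hr : r ^ 2 = X ^ 2 + Y ^ 2) by (unfold r, Cmod; rewrite pow2_sqrt; simpl; nra).
  assert (E : X ^ 2 + Y ^ 2 = zsum (fun k => X * fst (b k) + Y * snd (b k))).
  { rewrite zsum_plus, !zsum_scal by (apply zsummable_scal; auto). fold X Y. ring. }
  assert (Le : zsum (fun k => X * fst (b k) + Y * snd (b k)) <= r * zsum (fun k => Cmod (b k))).
  { rewrite <- zsum_scal. apply zsum_le; auto using zsummable_scal, zsummable_plus.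
    intros k. unfold r, Cmod. apply dot2_le_sqrt_mul. }
  assert (0 <= r) by apply Cmod_ge_0.
  assert (0 <= zsum (fun k => Cmod (b k))) by (apply zsum_nonneg; auto; intros; apply Cmod_ge_0).
  nra.
Qed.

Lemma Rpower_pos x y : 0 < Rpower x y.
Proof. unfold Rpower; apply exp_pos. Qed.

(* Telescoping form of the integral test.  With y = x + 1 it reads
   1 + g / y <= (y / x) ^ g, and (y / x) ^ g = exp (g ln (y / x)) >= 1 + g ln (y / x),
   while ln (y / x) >= 1 - x / y = 1 / y. *)
Lemma Rpower_telescope x g : 0 < x -> 0 < g ->
  g * Rpower (x + 1) (- (g + 1)) <= Rpower x (- g) - Rpower (x + 1) (- g).
Proof.
  intros Hx Hg. unfold Rpower. set (y := x + 1).
  set (E := exp (- g * ln y)). assert (HE : 0 < E) by apply exp_pos.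
  assert (Ey : exp (- (g + 1) * ln y) = E * / y).
  { replace (- (g + 1) * ln y) with (- g * ln y + - ln y) by ring.
    rewrite exp_plus, exp_Ropp, exp_ln by (unfold y; lra). reflexivity. }
  set (D := ln y - ln x).
  assert (Ex : exp (- g * ln x) = E * exp (g * D)).
  { unfold E, D. rewrite <- exp_plus. f_equal. ring. }
  assert (HD : / y <= D).
  { pose proof (exp_ineq1_le (ln x - ln y)) as H.
    unfold Rminus in H. rewrite exp_plus, exp_Ropp, !exp_ln in H by (unfold y; lra).
    unfold D. replace (x * / y) with (1 - / y) in H by (unfold y; field; lra). lra. }
  rewrite Ey, Ex.
  pose proof (exp_ineq1_le (g * D)).
  assert (g * / y <= g * D) by (apply Rmult_le_compat_l; lra).
  assert (E * (1 + g * / y) <= E * exp (g * D)) by (apply Rmult_le_compat_l; lra).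
  nra.
Qed.

Lemma sum_n_Rpower_le q N : 1 < q ->
  sum_n (fun n => Rpower (INR n + 1) (- q)) N
  <= 1 + / (q - 1) * (1 - Rpower (INR N + 1) (- (q - 1))).
Proof.
  intros Hq. induction N as [|N IH].
  - rewrite sum_O. simpl. rewrite Rplus_0_l.
    unfold Rpower. rewrite ln_1, !Rmult_0_r, exp_0. lra.
  - rewrite sum_Sn, S_INR. unfold plus; simpl.
    pose proof (pos_INR N).
    pose proof (Rpower_telescope (INR N + 1) (q - 1) ltac:(lra) ltac:(lra)) as T.
    replace (- (q - 1 + 1)) with (- q) in T by ring.
    assert (Hinv : 0 < / (q - 1)) by (apply Rinv_0_lt_compat; lra).
    apply (Rmult_le_compat_l (/ (q - 1))) in T; [|lra].
    replace (/ (q - 1) * ((q - 1) * Rpower (INR N + 1 + 1) (- q)))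
      with (Rpower (INR N + 1 + 1) (- q)) in T by (field; lra).
    lra.
Qed.

Lemma ex_series_Rpower_neg q : 1 < q -> ex_series (fun n => Rpower (INR n + 1) (- q)).
Proof.
  intros Hq. apply (ex_series_bounded_sum_n _ (1 + / (q - 1))).
  - intros n. left; apply Rpower_pos.
  - intros N. eapply Rle_trans; [apply sum_n_Rpower_le; auto|].
    pose proof (Rpower_pos (INR N + 1) (- (q - 1))).
    assert (0 < / (q - 1)) by (apply Rinv_0_lt_compat; lra). nra.
Qed.

Definition zpow_neg (q : R) (n : Z) : R :=
  if Z.eq_dec n 0 then 0 else Rpower (Rabs (IZR n)) (- q).

Lemma zpow_neg_nonneg q n : 0 <= zpow_neg q n.
Proof. unfold zpow_neg. destruct Z.eq_dec; [lra | left; apply Rpower_pos]. Qed.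

Lemma zpow_neg_opp q n : zpow_neg q (- n) = zpow_neg q n.
Proof.
  unfold zpow_neg. destruct (Z.eq_dec (- n) 0), (Z.eq_dec n 0); try lia; auto.
  rewrite opp_IZR, Rabs_Ropp. reflexivity.
Qed.

Lemma zpow_neg_neg_succ q n : zpow_neg q (- Z.of_nat (S n))%Z = Rpower (INR n + 1) (- q).
Proof.
  unfold zpow_neg. destruct Z.eq_dec; [lia|].
  rewrite opp_IZR, Rabs_Ropp, <- INR_IZR_INZ, S_INR, Rabs_pos_eq; auto.
  pose proof (pos_INR n); lra.
Qed.

Lemma zsummable_zpow_neg q : 1 < q -> zsummable (zpow_neg q).
Proof.
  intros Hq.
  assert (Hneg : ex_series (fun n => Rabs (zpow_neg q (- Z.of_nat (S n))%Z))).
  { eapply ex_series_ext; [| apply (ex_series_Rpower_neg q Hq)].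
    intros n. rewrite zpow_neg_neg_succ, Rabs_pos_eq; [reflexivity | left; apply Rpower_pos]. }
  split; auto.
  apply ex_series_incr_1. eapply ex_series_ext; [| exact Hneg].
  intros n. rewrite <- zpow_neg_opp. reflexivity.
Qed.

Lemma Rpower_weight_le_ordered x y z b r : 1 <= y -> y <= x -> 0 < z -> z <= x + y ->
  0 <= b -> 0 <= r ->
  Rpower z (2 * b) * (Rpower x (- (2 * (r + b))) * Rpower y (- (2 * (r + b))))
  <= Rpower 2 (2 * b) * (Rpower x (- (4 * r)) + Rpower y (- (4 * r))).
Proof.
  intros Hy Hxy Hz Hzxy Hb Hr.
  assert (Hzx : Rpower z (2 * b) <= Rpower 2 (2 * b) * Rpower x (2 * b)).
  { rewrite Rpower_mult_distr by lra. apply Rle_Rpower_l; lra. }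
  assert (Hx : Rpower x (2 * b) * Rpower x (- (2 * (r + b))) <= Rpower y (- (2 * r))).
  { rewrite <- Rpower_plus. replace (2 * b + - (2 * (r + b))) with (- (2 * r)) by ring.
    rewrite !Rpower_Ropp. apply Rinv_le_contravar; [apply Rpower_pos|].
    apply Rle_Rpower_l; lra. }
  assert (Hy' : Rpower y (- (2 * (r + b))) <= Rpower y (- (2 * r))) by (apply Rle_Rpower; lra).
  assert (Hyy : Rpower y (- (2 * r)) * Rpower y (- (2 * r)) = Rpower y (- (4 * r))).
  { rewrite <- Rpower_plus. f_equal; ring. }
  pose proof (Rpower_pos z (2 * b)). pose proof (Rpower_pos 2 (2 * b)).
  pose proof (Rpower_pos x (2 * b)). pose proof (Rpower_pos x (- (2 * (r + b)))).
  pose proof (Rpower_pos y (- (2 * (r + b)))). pose proof (Rpower_pos x (- (4 * r))).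
  pose proof (Rpower_pos y (- (2 * r))).
  apply Rle_trans with (Rpower 2 (2 * b) * Rpower x (2 * b) *
    (Rpower x (- (2 * (r + b))) * Rpower y (- (2 * (r + b))))).
  { apply Rmult_le_compat_r; nra. }
  replace (Rpower 2 (2 * b) * Rpower x (2 * b) *
    (Rpower x (- (2 * (r + b))) * Rpower y (- (2 * (r + b)))))
    with (Rpower 2 (2 * b) * ((Rpower x (2 * b) * Rpower x (- (2 * (r + b)))) *
      Rpower y (- (2 * (r + b))))) by ring.
  apply Rle_trans with (Rpower 2 (2 * b) * (Rpower y (- (2 * r)) * Rpower y (- (2 * r)))).
  { apply Rmult_le_compat_l; [lra|]. apply Rmult_le_compat; nra. }
  rewrite Hyy. nra.
Qed.

(* Read with x = |k1|, y = |k2|, z = |k1 + k2| <= 2 max(x, y): the factor z^(2b)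
   is absorbed by the larger of the two frequencies. *)
Lemma Rpower_weight_le x y z b r : 1 <= x -> 1 <= y -> 0 < z -> z <= x + y ->
  0 <= b -> 0 <= r ->
  Rpower z (2 * b) * (Rpower x (- (2 * (r + b))) * Rpower y (- (2 * (r + b))))
  <= Rpower 2 (2 * b) * (Rpower x (- (4 * r)) + Rpower y (- (4 * r))).
Proof.
  intros. destruct (Rle_dec y x).
  - apply Rpower_weight_le_ordered; lra.
  - rewrite (Rmult_comm (Rpower x _)), (Rplus_comm (Rpower x _)).
    apply Rpower_weight_le_ordered; lra.
Qed.

Lemma Rabs_IZR_ge_1 k : k <> 0%Z -> 1 <= Rabs (IZR k).
Proof. intros. rewrite <- abs_IZR. apply IZR_le. lia. Qed.

Definition pair_weight (sg : R) (k k1 : Z) : R :=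
  zpow_neg (2 * sg) k1 * zpow_neg (2 * sg) (k - k1).

Lemma pair_weight_nonneg sg k k1 : 0 <= pair_weight sg k k1.
Proof. apply Rmult_le_pos; apply zpow_neg_nonneg. Qed.

Lemma pair_weight_le_zpow_neg b r k k1 : 0 <= b -> 0 <= r -> k <> 0%Z ->
  Rpower (Rabs (IZR k)) (2 * b) * pair_weight (r + b) k k1
  <= Rpower 2 (2 * b) * (zpow_neg (4 * r) k1 + zpow_neg (4 * r) (k - k1)).
Proof.
  intros Hb Hr Hk.
  pose proof (Rpower_pos 2 (2 * b)).
  pose proof (zpow_neg_nonneg (4 * r) k1). pose proof (zpow_neg_nonneg (4 * r) (k - k1)).
  unfold pair_weight, zpow_neg at 1 2.
  destruct (Z.eq_dec k1 0); [rewrite Rmult_0_l, Rmult_0_r; nra|].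
  destruct (Z.eq_dec (k - k1) 0); [rewrite Rmult_0_r, Rmult_0_r; nra|].
  unfold zpow_neg. do 2 (destruct Z.eq_dec; [lia|]).
  apply Rpower_weight_le; auto using Rabs_IZR_ge_1.
  - pose proof (Rabs_IZR_ge_1 _ Hk); lra.
  - replace (IZR k) with (IZR k1 + IZR (k - k1)) by (rewrite minus_IZR; ring).
    apply Rabs_triang.
Qed.

Lemma zsum_pair_weight_le b r k : 0 <= b -> 1 / 4 < r -> k <> 0%Z ->
  zsummable (pair_weight (r + b) k) /\
  Rpower (Rabs (IZR k)) (2 * b) * zsum (pair_weight (r + b) k)
  <= Rpower 2 (2 * b) * (2 * zsum (zpow_neg (4 * r))).
Proof.
  intros Hb Hr Hk.
  set (p := zpow_neg (4 * r)).
  set (w := pair_weight (r + b) k).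
  set (P := Rpower (Rabs (IZR k)) (2 * b)).
  assert (Sp : zsummable p) by (apply zsummable_zpow_neg; lra).
  assert (Hp : forall j, 0 <= p j) by (intros; apply zpow_neg_nonneg).
  assert (Hrefl : zsummable (fun j => p (k - j)%Z) /\ zsum (fun j => p (k - j)%Z) <= zsum p).
  { destruct (zsummable_translate p k Hp Sp) as [S1 S2].
    assert (E : forall j, p (j - k)%Z = p (k - j)%Z).
    { intros j. unfold p. rewrite <- zpow_neg_opp. f_equal. lia. }
    split; [apply (zsummable_ext _ _ E S1) | rewrite <- (zsum_ext _ _ E); exact S2]. }
  set (g := fun j => Rpower 2 (2 * b) * (p j + p (k - j)%Z)).
  assert (Sg : zsummable g) by (apply zsummable_scal, zsummable_plus; [exact Sp | apply Hrefl]).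
  assert (Hwg : forall j, P * w j <= g j)
    by (intros; apply pair_weight_le_zpow_neg; [lra | lra | exact Hk]).
  assert (HP : 1 <= P).
  { unfold P. rewrite <- (Rpower_O (Rabs (IZR k))) by (pose proof (Rabs_IZR_ge_1 _ Hk); lra).
    apply Rle_Rpower; [apply Rabs_IZR_ge_1 | lra]; auto. }
  assert (Hw : forall j, 0 <= w j) by (intros; apply pair_weight_nonneg).
  assert (Sw : zsummable w).
  { apply (zsummable_le _ g); auto. intros j. rewrite Rabs_pos_eq by auto.
    specialize (Hwg j); specialize (Hw j); nra. }
  split; auto.
  rewrite <- zsum_scal. apply Rle_trans with (zsum g).
  - apply zsum_le; auto. apply zsummable_scal; auto.
  - unfold g. rewrite zsum_scal, zsum_plus by (auto; apply Hrefl).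
    apply Rmult_le_compat_l; [left; apply Rpower_pos|]. pose proof (proj2 Hrefl). lra.
Qed.

Lemma Cmod_Cexpi th : Cmod (Cexpi th) = 1.
Proof.
  unfold Cmod, Cexpi; simpl. rewrite !Rmult_1_r.
  replace (cos th * cos th + sin th * sin th) with 1
    by (pose proof (sin2_cos2 th); unfold Rsqr in *; lra).
  apply sqrt_1.
Qed.

Lemma hterm_nonneg s v k : 0 <= hterm s v k.
Proof.
  unfold hterm. destruct Z.eq_dec; [lra|].
  pose proof (Rpower_pos (Rabs (IZR k)) (2 * s)). pose proof (pow2_ge_0 (Cmod (v k))). nra.
Qed.

Lemma Rpower_weight_cancel X s : 0 < X -> Rpower X (- (2 * (1 + s))) * Rpower X (2 * s) = / (X * X).
Proof.
  intros HX. rewrite <- Rpower_plus.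
  replace (- (2 * (1 + s)) + 2 * s) with (- INR 2) by (simpl; ring).
  rewrite Rpower_Ropp, Rpower_pow by auto. simpl. f_equal; ring.
Qed.

Lemma Cmod_b2term_sq s t u v k k1 :
  Cmod (b2term t u v k k1) ^ 2 = pair_weight (1 + s) k k1 * (hterm s u k1 * hterm s v (k - k1)).
Proof.
  unfold b2term, pair_weight, zpow_neg, hterm. cbv zeta.
  destruct (Z.eq_dec k1 0) as [|Hk1]; [rewrite Cmod_R, Rabs_R0; ring|].
  destruct (Z.eq_dec (k - k1) 0) as [|Hk2]; [rewrite Cmod_R, Rabs_R0; ring|].
  pose proof (Rabs_IZR_ge_1 _ Hk1). pose proof (Rabs_IZR_ge_1 _ Hk2).
  rewrite Cmod_div.
  2:{ intros Hc. apply (f_equal fst) in Hc. simpl in Hc.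
      apply Rmult_integral in Hc as [Hc|Hc]; apply eq_IZR_R0 in Hc; lia. }
  rewrite !Cmod_mult, Cmod_Cexpi, Cmod_R, Rabs_mult.
  set (X := Rabs (IZR k1)) in *. set (Y := Rabs (IZR (k - k1))) in *.
  transitivity ((Rpower X (- (2 * (1 + s))) * Rpower X (2 * s)) *
    (Rpower Y (- (2 * (1 + s))) * Rpower Y (2 * s)) * (Cmod (u k1) ^ 2 * Cmod (v (k - k1)%Z) ^ 2)).
  - rewrite !Rpower_weight_cancel by lra. field. lra.
  - ring.
Qed.

Lemma Cmod_B2_sq_le s t u v k : In_Hs s u -> In_Hs s v -> zsummable (pair_weight (1 + s) k) ->
  zsummable (fun k1 => Cmod (b2term t u v k k1)) /\
  Cmod (B2 t u v k) ^ 2 <= zsum (pair_weight (1 + s) k) * zconv (hterm s u) (hterm s v) k.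
Proof.
  intros Su Sv Sw.
  destruct (zsum_cauchy_schwarz (fun k1 => Cmod (b2term t u v k k1)) (pair_weight (1 + s) k)
              (fun k1 => hterm s u k1 * hterm s v (k - k1)%Z)) as [Sb Hcs]; auto.
  - intros; apply Cmod_ge_0.
  - intros; apply pair_weight_nonneg.
  - intros; apply Rmult_le_pos; apply hterm_nonneg.
  - intros k1. rewrite (Cmod_b2term_sq s). lra.
  - apply zsummable_conv_term; auto using hterm_nonneg.
  - split; auto.
    pose proof (Cmod_zsum_le (b2term t u v k) Sb).
    pose proof (Cmod_ge_0 (B2 t u v k)).
    eapply Rle_trans; [| exact Hcs]. unfold B2. apply pow_incr; auto.
Qed.

(* The square of the constant c_2'(s, alpha). *)
Definition B2_const (s alpha : R) : R :=
  Rpower 2 (2 * (s + alpha)) * (2 * zsum (zpow_neg (4 * (1 - alpha)))).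

Lemma B2_const_nonneg s alpha : alpha < 3 / 4 -> 0 <= B2_const s alpha.
Proof.
  intros Ha. unfold B2_const. pose proof (Rpower_pos 2 (2 * (s + alpha))).
  assert (0 <= zsum (zpow_neg (4 * (1 - alpha)))).
  { apply zsum_nonneg; [apply zpow_neg_nonneg | apply zsummable_zpow_neg; lra]. }
  nra.
Qed.

Lemma hterm_B2_le s alpha t u v k : 0 <= s + alpha -> alpha < 3 / 4 ->
  In_Hs s u -> In_Hs s v ->
  (k <> 0%Z -> zsummable (fun k1 => Cmod (b2term t u v k k1))) /\
  hterm (s + alpha) (B2 t u v) k <= B2_const s alpha * zconv (hterm s u) (hterm s v) k.
Proof.
  intros Hb Ha Su Sv.
  assert (Hconv : 0 <= zconv (hterm s u) (hterm s v) k).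
  { apply zsum_nonneg; [intros; apply Rmult_le_pos; apply hterm_nonneg |].
    apply zsummable_conv_term; auto using hterm_nonneg. }
  unfold hterm at 1. destruct (Z.eq_dec k 0) as [Hk|Hk].
  { split; [contradiction|]. pose proof (B2_const_nonneg s alpha Ha). nra. }
  destruct (zsum_pair_weight_le (s + alpha) (1 - alpha) k) as [Sw Hw]; auto; [lra|].
  replace (1 - alpha + (s + alpha)) with (1 + s) in Sw, Hw by ring.
  destruct (Cmod_B2_sq_le s t u v k Su Sv Sw) as [Sb HB].
  split; auto.
  pose proof (Rpower_pos (Rabs (IZR k)) (2 * (s + alpha))).
  apply Rle_trans with (Rpower (Rabs (IZR k)) (2 * (s + alpha)) *
    (zsum (pair_weight (1 + s) k) * zconv (hterm s u) (hterm s v) k)).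
  - apply Rmult_le_compat_l; lra.
  - rewrite <- Rmult_assoc. apply Rmult_le_compat_r; auto.
Qed.

Theorem lemma7p4 (s alpha : R) (Hsa : 0 <= s + alpha) (Ha : alpha < 3 / 4)
  (Hs : -3 / 4 < s) :
  exists c : R, 0 <= c /\
    forall (t : R) (u v : Z -> C), In_Hs s u -> In_Hs s v ->
      (forall k : Z, k <> 0%Z -> zsummable (fun k1 => Cmod (b2term t u v k k1))) /\
      In_Hs (s + alpha) (B2 t u v) /\
      Hnorm (s + alpha) (B2 t u v) <= c * Hnorm s u * Hnorm s v.
Proof.
  exists (sqrt (B2_const s alpha)). split; [apply sqrt_pos|].
  intros t u v Su Sv.
  pose proof (fun k => hterm_B2_le s alpha t u v k Hsa Ha Su Sv) as HB.
  destruct (zsum_conv_le (hterm s u) (hterm s v)) as [Sc Hc]; auto using hterm_nonneg.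
  destruct (zsum_le_of_le (hterm (s + alpha) (B2 t u v))
              (fun k => B2_const s alpha * zconv (hterm s u) (hterm s v) k)) as [SB HsB].
  { intros k. split; [apply hterm_nonneg | apply HB]. }
  { apply zsummable_scal, Sc. }
  split; [intros k; apply HB | split; [exact SB |]].
  pose proof (B2_const_nonneg s alpha Ha) as HC.
  assert (Nu : 0 <= zsum (hterm s u)) by (apply zsum_nonneg; auto using hterm_nonneg).
  assert (Nv : 0 <= zsum (hterm s v)) by (apply zsum_nonneg; auto using hterm_nonneg).
  unfold Hnorm. rewrite <- (sqrt_mult _ _ HC Nu), <- sqrt_mult by (auto; apply Rmult_le_pos; auto).
  apply sqrt_le_1_alt. rewrite zsum_scal in HsB. rewrite Rmult_assoc. nra.
Qed.
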